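(* Let $R_1,\dots,R_6$ be six rods in $\mathbb{R}^3$ ($n_r^i=1$ for all $i$) in generic position. Suppose they intersect in the strutted configuration in which each of $R_3,R_4,R_5,R_6$ joins $R_1$ to $R_2$: there are points $\mathbf p_1\in R_1\cap R_3$, $\mathbf p_2\in R_2\cap R_3$, $\mathbf p_3\in R_1\cap R_4$, $\mathbf p_4\in R_2\cap R_4$, $\mathbf p_5\in R_1\cap R_5$, $\mathbf p_6\in R_2\cap R_5$, $\mathbf p_7\in R_1\cap R_6$, $\mathbf p_8\in R_2\cap R_6$. Then the composite body $R_1\cup\cdots\cup R_6$ is rigid.
   Context: A rod is a straight segment in $\mathbb{R}^3$ that moves as a rigid body; $n_r^i$ denotes the number of rods in component $R_i$. Positions are generic apart from the stated incidences. A union of rods is rigid if it is infinitesimally rigid in the following sense. An infinitesimal motion is admissible if it preserves, to first order, distances between points on each rod, and if points lying on a common rod keep fixed relative position along the rod to first order. For example, $\mathbf p_3$ and $\mathbf p_5$ stay fixed relative to $\mathbf p_1,\mathbf p_7$ on $R_1$, and $\mathbf p_4,\mathbf p_6$ stay fixed relative to $\mathbf p_2,\mathbf p_8$ on $R_2$. The union is rigid if every admissible infinitesimal motion is a Euclidean rigid motion of the whole union. Equivalently, the composite rigidity matrix has a right nullspace of dimension $6$. *)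

From HB Require Import structures.
From mathcomp Require Import all_boot all_order all_algebra.
From mathcomp Require Import reals.
From mathcomp Require Import mpoly.
Set Implicit Arguments. Unset Strict Implicit. Unset Printing Implicit Defensive.
Import Order.TTheory GRing.Theory Num.Theory.
Local Open Scope ring_scope.

Section RodDefs.
Variable R : realType.

Definition vec3 (a b c : R) : 'rV[R]_3 := \row_(i < 3) [:: a; b; c]`_i.

Definition cross3 (u w : 'rV[R]_3) : 'rV[R]_3 :=
  vec3 (u 0 1 * w 0 2 - u 0 2 * w 0 1)
       (u 0 2 * w 0 0 - u 0 0 * w 0 2)
       (u 0 0 * w 0 1 - u 0 1 * w 0 0).

(* velocity at the point y of the infinitesimal Euclidean (rigid) motion with
   angular velocity om and translational velocity v:  om x y + v *)
Definition rvel (om v y : 'rV[R]_3) : 'rV[R]_3 := cross3 om y + v.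

(* Points are indexed 0..7 (paper: p_1..p_8,
   i.e. index i stands for p_(i+1)); rods are indexed 0..5 (paper R_1..R_6).
   Point i lies on rod [rodA i] = R_1 (i even) or R_2 (i odd), and on the
   strut rod [rodB i] = R_(3 + i/2). *)
Definition rodA (i : 'I_8) : 'I_6 := inord (odd i).
Definition rodB (i : 'I_8) : 'I_6 := inord (2 + i./2).

(* Two incident points spanning the line of each rod:
   R_1 : p_1, p_7 ; R_2 : p_2, p_8 ; R_(3+j) : p_(2j+1), p_(2j+2). *)
Definition rod_pt1 (k : 'I_6) : 'I_8 :=
  if (k : nat) == 0%N then inord 0 else if (k : nat) == 1%N then inord 1
  else inord (2 * (k - 2)).
Definition rod_pt2 (k : 'I_6) : 'I_8 :=
  if (k : nat) == 0%N then inord 6 else if (k : nat) == 1%N then inord 7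
  else inord (2 * (k - 2) + 1).

Definition rod_line (p : 'I_8 -> 'rV[R]_3) (k : 'I_6) (t : R) : 'rV[R]_3 :=
  p (rod_pt1 k) + t *: (p (rod_pt2 k) - p (rod_pt1 k)).

(* An admissible infinitesimal motion: every rod k moves as a rigid body with
   (om k, v k), and at each intersection point the two rods through it give
   that point the same velocity. *)
Definition admissible (p : 'I_8 -> 'rV[R]_3) (om v : 'I_6 -> 'rV[R]_3) :=
  forall i : 'I_8,
    rvel (om (rodA i)) (v (rodA i)) (p i) = rvel (om (rodB i)) (v (rodB i)) (p i).

Definition union_rigid (p : 'I_8 -> 'rV[R]_3) :=
  forall om v : 'I_6 -> 'rV[R]_3, admissible p om v ->
    exists om0 v0 : 'rV[R]_3, forall (k : 'I_6) (t : R),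
      rvel (om k) (v k) (rod_line p k t) = rvel om0 v0 (rod_line p k t).

Definition strut_config (x : 'I_18 -> R) (i : 'I_8) : 'rV[R]_3 :=
  let X (n : nat) := x (inord n) in
  let a := vec3 (X 0%N) (X 1%N) (X 2%N) in
  let d := vec3 (X 3%N) (X 4%N) (X 5%N) in
  let b := vec3 (X 9%N) (X 10%N) (X 11%N) in
  let e := vec3 (X 12%N) (X 13%N) (X 14%N) in
  match (i : nat) with
  | 0%N => a
  | 1%N => b
  | 2%N => a + X 6%N *: d
  | 3%N => b + X 15%N *: e
  | 4%N => a + X 7%N *: d
  | 5%N => b + X 16%N *: e
  | 6%N => a + X 8%N *: d
  | _ => b + X 17%N *: e
  end.

End RodDefs.

(* Let R_1 = {a + t d} and R_2 = {b + s e} move with (om_0, v_0) and (om_1, v_1).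
   Their relative motion D = (om_1 - om_0, v_1 - v_0) is again an infinitesimal
   rigid motion.  A strut joining q in R_1 to r in R_2 moves rigidly, so relative
   to R_1 it fixes q and D(r) is orthogonal to r - q.  The defect
   D(b + s e) . (b + s e - a - t d) equals alpha + beta s - gamma t - eps s t, so
   the strut R_3 gives alpha = 0 and the other three struts give a linear system
   for (beta, gamma, eps) with matrix rows (s_i, t_i, s_i t_i).  When that matrix
   is invertible and the rods R_1, R_2 are skew (det (d, b - a, e) <> 0), all
   four coefficients vanish, which forces D to be a rotation about the axis of
   R_1 along R_2.  Adding this rotation to the motion of R_1 yields one Euclidean
   motion agreeing with R_1 and R_2 at all eight joints, hence with every rod,
   since a rigid velocity field is affine along a line.  The genericity
   polynomial is the product of the two determinants. *)

From HB Require Import structures.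
From mathcomp Require Import all_boot all_order all_algebra.
From mathcomp Require Import reals.
From mathcomp Require Import mpoly.
From mathcomp Require Import ring.
Set Implicit Arguments. Unset Strict Implicit. Unset Printing Implicit Defensive.
Import Order.TTheory GRing.Theory Num.Theory.
Local Open Scope ring_scope.

Section Matrix3.
Variable A : comNzRingType.

Definition row3 (a b c : A) : 'rV[A]_3 := \row_(i < 3) [:: a; b; c]`_i.
Definition mx3 (u v w : 'rV[A]_3) : 'M[A]_3 := \matrix_(i < 3) [:: u; v; w]`_i.

Lemma det_mx33 (M : 'M[A]_3) :
  \det M = M 0 0 * (M 1 1 * M 2 2 - M 1 2 * M 2 1)
         - M 0 1 * (M 1 0 * M 2 2 - M 1 2 * M 2 0)
         + M 0 2 * (M 1 0 * M 2 1 - M 1 1 * M 2 0).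
Proof.
pose m (i j : nat) := M (inord i) (inord j).
have mE i j : M i j = m i j by rewrite /m !inord_val.
rewrite (expand_det_row _ 0) /cofactor !big_ord_recl big_ord0.
rewrite !(expand_det_row _ 0) /cofactor !big_ord_recl !big_ord0 !det_mx11 !mxE !mE /=.
by rewrite /m; ring.
Qed.

End Matrix3.

Section MapMatrix3.
Variables (A B : comNzRingType) (f : {rmorphism A -> B}).

Lemma map_row3 (a b c : A) : map_mx f (row3 a b c) = row3 (f a) (f b) (f c).
Proof. by apply/rowP => -[[|[|[|//]]] ?]; rewrite !mxE. Qed.

Lemma map_mx3 (u v w : 'rV[A]_3) :
  map_mx f (mx3 u v w) = mx3 (map_mx f u) (map_mx f v) (map_mx f w).
Proof. by apply/matrixP => -[[|[|[|//]]] ?] j; rewrite !mxE. Qed.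

End MapMatrix3.

Definition dot3 {R : realType} (u w : 'rV[R]_3) : R :=
  u 0 0 * w 0 0 + u 0 1 * w 0 1 + u 0 2 * w 0 2.

Ltac coords := rewrite /dot3 /rvel /cross3 /vec3 /row3 ?mxE /=.

Section Kinematics.
Variable R : realType.
Implicit Types (u w om v d a p q y : 'rV[R]_3).

Lemma rV3_ext u w : u 0 0 = w 0 0 -> u 0 1 = w 0 1 -> u 0 2 = w 0 2 -> u = w.
Proof.
move=> e0 e1 e2; apply/rowP => -[[|[|[|//]]] i3].
- by rewrite (_ : Ordinal i3 = 0) //; apply: val_inj.
- by rewrite (_ : Ordinal i3 = 1) //; apply: val_inj.
- by rewrite (_ : Ordinal i3 = 2) //; apply: val_inj.
Qed.

Ltac vcoords := apply: rV3_ext; coords; ring.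

Lemma det_rows3 (M : 'M[R]_3) : \det M = dot3 (row 0 M) (cross3 (row 1 M) (row 2 M)).
Proof. by rewrite det_mx33; coords; ring. Qed.

Lemma det_mx3 u1 u2 u3 : \det (mx3 u1 u2 u3) = dot3 u1 (cross3 u2 u3).
Proof. by rewrite det_rows3 !rowK. Qed.

Lemma triple_product_expansion u1 u2 u3 w :
  dot3 u1 (cross3 u2 u3) *: w =
  dot3 u1 w *: cross3 u2 u3 + dot3 u2 w *: cross3 u3 u1 + dot3 u3 w *: cross3 u1 u2.
Proof. vcoords. Qed.

Lemma det_orthogonal_eq0 (M : 'M[R]_3) w :
  \det M != 0 -> (forall i, dot3 (row i M) w = 0) -> w = 0.
Proof.
rewrite det_rows3 => M0 Mw.
by apply: (scalerI M0); rewrite triple_product_expansion !Mw !scale0r !addr0 scaler0.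
Qed.

Lemma dot3_cross3 u w : dot3 (cross3 u w) w = 0.
Proof. coords; ring. Qed.

Lemma rvel_affine om v p q t :
  rvel om v (p + t *: (q - p)) = (1 - t) *: rvel om v p + t *: rvel om v q.
Proof. vcoords. Qed.

Lemma rvelB om0 v0 om1 v1 y :
  rvel om1 v1 y - rvel om0 v0 y = rvel (om1 - om0) (v1 - v0) y.
Proof. vcoords. Qed.

Lemma rvel_sub_points om v r q : rvel om v r - rvel om v q = cross3 om (r - q).
Proof. vcoords. Qed.

Lemma rvel_add_rotation om v d a l y :
  rvel (om + l *: d) (v - l *: cross3 d a) y = rvel om v y + l *: cross3 d (y - a).
Proof. vcoords. Qed.

Lemma cross3_axis d a t : cross3 d (a + t *: d - a) = 0.
Proof. vcoords. Qed.

Lemma strut_orthogonal om0 v0 om1 v1 oms vs q r :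
  rvel om0 v0 q = rvel oms vs q -> rvel om1 v1 r = rvel oms vs r ->
  dot3 (rvel (om1 - om0) (v1 - v0) r) (r - q) = 0.
Proof.
move=> q_strut r_strut.
have -> : rvel (om1 - om0) (v1 - v0) r =
          rvel (oms - om0) (vs - v0) r - rvel (oms - om0) (vs - v0) q.
  by rewrite -!rvelB q_strut r_strut subrr subr0.
by rewrite rvel_sub_points dot3_cross3.
Qed.

Lemma rvel_on_line_rotation a d b e W U :
  \det (mx3 d (b - a) e) != 0 ->
  dot3 (rvel W U b) (b - a) = 0 -> dot3 (rvel W U b) d = 0 ->
  dot3 (cross3 W e) d = 0 -> dot3 (rvel W U b) e + dot3 (cross3 W e) (b - a) = 0 ->
  exists l, forall r, rvel W U (b + r *: e) = l *: cross3 d (b + r *: e - a).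
Proof.
move=> T0 al0 ga0 ep0 be0; set T := \det _ in T0.
set k := dot3 (rvel W U b) e.
exists (k / T) => r; apply: (scalerI T0).
rewrite scalerA mulrCA divff // mulr1; apply/eqP; rewrite -subr_eq0; apply/eqP.
apply: (det_orthogonal_eq0 T0) => -[[|[|[|//]]] i3]; rewrite rowK /=.
- transitivity (T * (dot3 (rvel W U b) d + r * dot3 (cross3 W e) d)).
    by rewrite /T det_mx3; coords; ring.
  by rewrite ga0 ep0 mulr0 addr0 mulr0.
- transitivity (T * (dot3 (rvel W U b) (b - a) + r * (k + dot3 (cross3 W e) (b - a)))).
    by rewrite /T /k det_mx3; coords; ring.
  by rewrite al0 be0 mulr0 addr0 mulr0.
- by rewrite /T /k det_mx3; coords; ring.
Qed.

Lemma relative_motion_rotation a d b e W U (s t : 'I_3 -> R) :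
  \det (\matrix_(i < 3) vec3 (s i) (t i) (s i * t i)) != 0 ->
  \det (mx3 d (b - a) e) != 0 ->
  dot3 (rvel W U b) (b - a) = 0 ->
  (forall i, dot3 (rvel W U (b + s i *: e)) (b + s i *: e - (a + t i *: d)) = 0) ->
  exists l, forall r, rvel W U (b + r *: e) = l *: cross3 d (b + r *: e - a).
Proof.
move=> S0 T0 al0 struts.
set al := dot3 (rvel W U b) (b - a) in al0.
set be := dot3 (rvel W U b) e + dot3 (cross3 W e) (b - a).
set ga := dot3 (rvel W U b) d.
set ep := dot3 (cross3 W e) d.
(* There is no [s' ^ 2] term since [cross3 W e] is orthogonal to [e]. *)
have bilinear s' t' : dot3 (rvel W U (b + s' *: e)) (b + s' *: e - (a + t' *: d)) =
    al + s' * be - t' * ga - s' * t' * ep.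
  by rewrite /al /be /ga /ep; coords; ring.
have coeffs0 : vec3 be (- ga) (- ep) = 0.
  apply: (det_orthogonal_eq0 S0) => i; rewrite rowK -(struts i) bilinear al0.
  by coords; ring.
have /rowP coeff := coeffs0.
move: (coeff 0) (coeff 1) (coeff 2); rewrite !mxE /= => be0 /eqP.
rewrite oppr_eq0 => /eqP ga0 /eqP; rewrite oppr_eq0 => /eqP ep0.
exact: rvel_on_line_rotation.
Qed.

End Kinematics.

Section RodIncidences.
Variable R : realType.

Lemma rod_pt1_on_rod (k : 'I_6) : k = rodA (rod_pt1 k) \/ k = rodB (rod_pt1 k).
Proof.
case: k => [[|[|[|[|[|[|//]]]]]] k6]; [left|left|right|right|right|right];
  by apply: val_inj; rewrite /rodA /rodB /rod_pt1 /= !inordK.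
Qed.

Lemma rod_pt2_on_rod (k : 'I_6) : k = rodA (rod_pt2 k) \/ k = rodB (rod_pt2 k).
Proof.
case: k => [[|[|[|[|[|[|//]]]]]] k6]; [left|left|right|right|right|right];
  by apply: val_inj; rewrite /rodA /rodB /rod_pt2 /= !inordK.
Qed.

Lemma agree_on_rods (p : 'I_8 -> 'rV[R]_3) (om v : 'I_6 -> 'rV[R]_3) om' v' :
  admissible p om v ->
  (forall i, rvel (om (rodA i)) (v (rodA i)) (p i) = rvel om' v' (p i)) ->
  forall k t, rvel (om k) (v k) (rod_line p k t) = rvel om' v' (rod_line p k t).
Proof.
move=> adm agree k t.
have on_rod i : k = rodA i \/ k = rodB i -> rvel (om k) (v k) (p i) = rvel om' v' (p i).
  by case=> ->; rewrite -?adm agree.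
by rewrite /rod_line !rvel_affine (on_rod _ (rod_pt1_on_rod k)) (on_rod _ (rod_pt2_on_rod k)).
Qed.

End RodIncidences.

(* With [X n = x (inord n)] in [strut_config x], the strut [R_(4+i)] joins
   [a + t_i d] on [R_1] to [b + s_i e] on [R_2], where [s_i = X (15 + i)] and
   [t_i = X (6 + i)]; [strut_mx] has rows [(s_i, t_i, s_i t_i)] and [frame_mx]
   has rows [d], [b - a], [e]. *)
Section GenericityMatrices.
Variable A : comNzRingType.
Implicit Type X : nat -> A.

Definition strut_mx X : 'M[A]_3 :=
  \matrix_(i < 3) row3 (X (15 + i)%N) (X (6 + i)%N) (X (15 + i)%N * X (6 + i)%N).

Definition frame_mx X : 'M[A]_3 :=
  mx3 (row3 (X 3%N) (X 4%N) (X 5%N))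
      (row3 (X 9%N) (X 10%N) (X 11%N) - row3 (X 0%N) (X 1%N) (X 2%N))
      (row3 (X 12%N) (X 13%N) (X 14%N)).

End GenericityMatrices.

Section MapGenericityMatrices.
Variables (A B : comNzRingType) (f : {rmorphism A -> B}).
Implicit Type X : nat -> A.

Lemma map_strut_mx X (Y : nat -> B) : f \o X =1 Y -> map_mx f (strut_mx X) = strut_mx Y.
Proof.
move=> fX; apply/matrixP => i j; rewrite !mxE.
by case: j => [[|[|[|//]]] ?]; rewrite /= ?rmorphM -!fX.
Qed.

Lemma map_frame_mx X (Y : nat -> B) : f \o X =1 Y -> map_mx f (frame_mx X) = frame_mx Y.
Proof. by move=> fX; rewrite /frame_mx map_mx3 map_mxB !map_row3 -!fX. Qed.

End MapGenericityMatrices.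

Definition genericity_poly (R : realType) : {mpoly R[18]} :=
  \det (strut_mx (fun n => 'X_(inord n))) * \det (frame_mx (fun n => 'X_(inord n))).

Lemma meval_genericity_poly (R : realType) (x : 'I_18 -> R) :
  (genericity_poly R).@[x] =
  \det (strut_mx (fun n => x (inord n))) * \det (frame_mx (fun n => x (inord n))).
Proof.
have mevalX : meval x \o (fun n => 'X_(inord n)) =1 (fun n => x (inord n)).
  by move=> n; rewrite /= mevalXU.
by rewrite rmorphM -!det_map_mx (map_strut_mx mevalX) (map_frame_mx mevalX).
Qed.

Section StrutConfig.
Variables (R : realType) (x : 'I_18 -> R).
Let X n := x (inord n).
Let a := vec3 (X 0) (X 1) (X 2).
Let d := vec3 (X 3) (X 4) (X 5).
Let b := vec3 (X 9) (X 10) (X 11).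
Let e := vec3 (X 12) (X 13) (X 14).

Lemma strut_config_agree (om v : 'I_6 -> 'rV[R]_3) om' v' :
  (forall t, rvel (om (inord 0)) (v (inord 0)) (a + t *: d) = rvel om' v' (a + t *: d)) ->
  (forall s, rvel (om (inord 1)) (v (inord 1)) (b + s *: e) = rvel om' v' (b + s *: e)) ->
  forall i, rvel (om (rodA i)) (v (rodA i)) (strut_config x i) =
            rvel om' v' (strut_config x i).
Proof.
move=> on_R1 on_R2 [[|[|[|[|[|[|[|[|//]]]]]]]] i8].
- by have := on_R1 0; rewrite scale0r addr0.
- by have := on_R2 0; rewrite scale0r addr0.
all: by [apply: on_R1 | apply: on_R2].
Qed.

Lemma strut_config_rigid :
  \det (strut_mx X) != 0 -> \det (frame_mx X) != 0 -> union_rigid (strut_config x).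
Proof.
move=> strut_generic skew om v adm.
pose W := om (inord 1) - om (inord 0); pose U := v (inord 1) - v (inord 0).
have [l rot] : exists l, forall r, rvel W U (b + r *: e) = l *: cross3 d (b + r *: e - a).
  apply: (@relative_motion_rotation _ a d b e W U (fun i => X (15 + i)) (fun i => X (6 + i)))
    => //.
  - exact: strut_orthogonal (adm (Ordinal (isT : 0 < 8)%N)) (adm (Ordinal (isT : 1 < 8)%N)).
  - case=> [[|[|[|//]]] ?].
    + exact: strut_orthogonal (adm (Ordinal (isT : 2 < 8)%N)) (adm (Ordinal (isT : 3 < 8)%N)).
    + exact: strut_orthogonal (adm (Ordinal (isT : 4 < 8)%N)) (adm (Ordinal (isT : 5 < 8)%N)).
    + exact: strut_orthogonal (adm (Ordinal (isT : 6 < 8)%N)) (adm (Ordinal (isT : 7 < 8)%N)).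
exists (om (inord 0) + l *: d), (v (inord 0) - l *: cross3 d a).
apply: agree_on_rods adm _; apply: strut_config_agree => [t|s].
- by rewrite rvel_add_rotation cross3_axis scaler0 addr0.
- by rewrite rvel_add_rotation -rot -rvelB subrKC.
Qed.

End StrutConfig.

Lemma genericity_poly_neq0 (R : realType) : genericity_poly R != 0.
Proof.
(* a = 0, (d, b, e) the standard basis, s = (1, 2, 3) and t = (1, 3, 2). *)
pose x0 (i : 'I_18) : R := [:: 0; 0; 0; 1; 0; 0; 1; 3%:R; 2%:R;
                                0; 1; 0; 0; 0; 1; 1; 2%:R; 3%:R]`_i.
apply/negP => /eqP P0; have := congr1 (meval x0) P0.
rewrite meval_genericity_poly meval0 !det_rows3 !rowK; coords.
rewrite /x0 !inordK //= => /eqP; apply/negP.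
by rewrite [X in X != 0](_ : _ = 7%:R) ?pnatr_eq0 //; ring.
Qed.

Theorem mainTheorem5 (R : realType) :
  exists P : {mpoly R[18]}, P != 0 /\
    forall x : 'I_18 -> R, P.@[x] != 0 -> union_rigid (strut_config x).
Proof.
exists (genericity_poly R); split; first exact: genericity_poly_neq0.
move=> x; rewrite meval_genericity_poly mulf_eq0 negb_or => /andP[].
exact: strut_config_rigid.
Qed.
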